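(* Let $G$ be a connected graph and let $v$ be a cut-vertex of $G$, where $G_1, \ldots, G_c$ are the connected components of $G - \{v\}$. Then for any minimal fort $F$ of $G$ with $v \notin F$, at most two indices $i$ satisfy $V(G_i) \cap F \neq \emptyset$.
   Context: Graphs are finite and simple. A fort of a graph $G$ is a nonempty set $F\subseteq V(G)$ such that every vertex outside $F$ is adjacent to either zero or at least two vertices of $F$; it is minimal if no proper subset is a fort. *)

(* A finite simple graph is a symmetric irreflexive
   relation e on a finType T. *)
From mathcomp Require Import all_boot.
Set Implicit Arguments. Unset Strict Implicit. Unset Printing Implicit Defensive.

Definition simple_graph (T : finType) (e : rel T) : Prop :=
  symmetric e /\ irreflexive e.

Definition connected_graph (T : finType) (e : rel T) : Prop :=
  forall x y : T, connect e x y.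

Definition fort (T : finType) (e : rel T) (F : {set T}) : Prop :=
  F != set0 /\
  forall u : T, u \notin F -> #|[set w in F | e u w]| != 1.

Definition minimal_fort (T : finType) (e : rel T) (F : {set T}) : Prop :=
  fort e F /\ forall F' : {set T}, F' \proper F -> ~ fort e F'.

Definition del_rel (T : finType) (e : rel T) (v : T) : rel T :=
  fun x y => [&& x != v, y != v & e x y].

Definition comps_del (T : finType) (e : rel T) (v : T) : {set {set T}} :=
  [set [set w | connect (del_rel e v) u w] | u in [set u | u != v]].

Definition cut_vertex (T : finType) (e : rel T) (v : T) : Prop :=
  1 < #|comps_del e v|.

From mathcomp Require Import all_boot.
Set Implicit Arguments. Unset Strict Implicit. Unset Printing Implicit Defensive.

(* Let S be a union of components of G - v, with v outside the fort F. A vertex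
   of G - v outside S has no neighbour in F :&: S, and one inside S has the same
   neighbours in F :&: S as in F; so F :&: S is again a fort unless v has
   exactly one neighbour in it. Hence, by minimality, if F meets S without being
   contained in it, v has exactly one neighbour in F :&: S. Were F to meet three
   components C1, C2, C3, this would give v one such neighbour in each of C1 and
   C2, hence two in C1 :|: C2, although F also meets C3. *)

Lemma closed_setU (T : finType) (r : rel T) (A B : {set T}) :
  closed r A -> closed r B -> closed r (A :|: B).
Proof. by move=> clA clB x y rxy; rewrite !inE (clA x y rxy) (clB x y rxy). Qed.

Lemma not_subset_disjoint (T : finType) (F C D : {set T}) :
  [disjoint C & D] -> D :&: F != set0 -> ~~ (F \subset C).
Proof.
move=> dCD; rewrite setI_eq0; apply: contraNN => sFC.
by rewrite disjoint_sym (disjointWl sFC dCD).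
Qed.

Section FortRestriction.

Variables (T : finType) (e : rel T) (v : T).

Lemma fort_setI_closed (F S : {set T}) :
  fort e F -> v \notin F -> closed (del_rel e v) S ->
  F :&: S != set0 -> #|[set w in F :&: S | e v w]| != 1 -> fort e (F :&: S).
Proof.
move=> [_ fortF] vF clS FS_ne0 v_nbhd; split=> // u.
have [-> //|uv] := eqVneq u v.
have del_uw w : w \in F -> e u w -> del_rel e v u w.
  by move=> wF euw; rewrite /del_rel uv euw andbT; apply: contraNneq vF => <-.
have [uS | uNS] := boolP (u \in S).
  rewrite inE uS andbT => /fortF; congr (_ != 1); apply: eq_card => w.
  rewrite !inE; have [wF | //] := boolP (w \in F).
  by case euw: (e u w); rewrite ?andbF // -(clS _ _ (del_uw w wF euw)) uS.
suff -> : [set w in F :&: S | e u w] = set0 by rewrite cards0.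
apply/setP => w; rewrite !inE; apply/negP => /andP[/andP[wF wS] euw].
by rewrite (clS _ _ (del_uw w wF euw)) wS in uNS.
Qed.

Lemma minimal_fort_nbhd_closed (F S : {set T}) :
  minimal_fort e F -> v \notin F -> closed (del_rel e v) S ->
  F :&: S != set0 -> ~~ (F \subset S) -> #|[set w in F :&: S | e v w]| = 1.
Proof.
move=> [fortF minF] vF clS FS_ne0 F_notin_S; apply/eqP/negPn/negP => v_nbhd.
apply: (minF (F :&: S)); last exact: fort_setI_closed.
by rewrite properEneq subsetIl andbT; apply: contraNneq F_notin_S => /setIidPl.
Qed.

Lemma card_nbhd_setU (A B : {set T}) : [disjoint A & B] ->
  #|[set w in A :|: B | e v w]| =
  #|[set w in A | e v w]| + #|[set w in B | e v w]|.
Proof.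
move=> dAB; rewrite !setIdE setIUl cardsU -setIIl.
by rewrite (disjoint_setI0 dAB) set0I cards0 subn0.
Qed.

End FortRestriction.

Section ComponentsDel.

Variables (T : finType) (e : rel T) (v : T).
Hypothesis sym_e : symmetric e.

Lemma connect_sym_del_rel : connect_sym (del_rel e v).
Proof. by apply: sym_connect_sym => x y; rewrite /del_rel sym_e andbCA. Qed.

Lemma comps_del_closed C : C \in comps_del e v -> closed (del_rel e v) C.
Proof.
case/imsetP=> u _ -> x y exy; rewrite !inE.
exact: connect_closed connect_sym_del_rel _ _ _ exy.
Qed.

Lemma comps_del_disjoint C D :
  C \in comps_del e v -> D \in comps_del e v -> C != D -> [disjoint C & D].
Proof.
case/imsetP=> u _ -> /imsetP[u' _ ->]; apply: contraR.
case/pred0Pn=> x /andP[]; rewrite !inE => ux u'x; apply/eqP/setP => w.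
have same_comp := same_connect connect_sym_del_rel.
by rewrite !inE (same_comp _ _ ux) (same_comp _ _ u'x).
Qed.

Lemma minimal_fort_nbhd_comps_del (F C D : {set T}) :
  minimal_fort e F -> v \notin F ->
  C \in comps_del e v -> D \in comps_del e v -> C != D ->
  C :&: F != set0 -> D :&: F != set0 -> #|[set w in F :&: C | e v w]| = 1.
Proof.
move=> minF vF Cv Dv nCD FC FD.
apply: minimal_fort_nbhd_closed minF vF (comps_del_closed Cv) _ _.
  by rewrite setIC.
exact: not_subset_disjoint (comps_del_disjoint Cv Dv nCD) FD.
Qed.

End ComponentsDel.

Theorem mainTheorem3 (T : finType) (e : rel T) (v : T) (F : {set T}) :
  simple_graph e -> connected_graph e -> cut_vertex e v ->
  minimal_fort e F -> v \notin F ->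
  #|[set C in comps_del e v | C :&: F != set0]| <= 2.
Proof.
move=> [sym_e _] _ _ minF vF; rewrite leqNgt; apply/negP.
case/card_gt2P=> C1 [C2 [C3 [[]]]]; rewrite !inE.
move=> /andP[C1v F1] /andP[C2v F2] /andP[C3v F3] [n12 n23 n31].
rewrite eq_sym in n31.
have d12 := comps_del_disjoint sym_e C1v C2v n12.
have d13 := comps_del_disjoint sym_e C1v C3v n31.
have d23 := comps_del_disjoint sym_e C2v C3v n23.
have nbhd1 := minimal_fort_nbhd_comps_del sym_e minF vF C1v C2v n12 F1 F2.
have nbhd2 := minimal_fort_nbhd_comps_del sym_e minF vF C2v C3v n23 F2 F3.
have F_meets_C12 : F :&: (C1 :|: C2) != set0.
  by rewrite setIUr setU_eq0 negb_and setIC F1.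
have F_notin_C12 : ~~ (F \subset C1 :|: C2).
  apply: not_subset_disjoint F3.
  by rewrite -setI_eq0 setIUl setU_eq0 !setI_eq0 d13 d23.
have cl_C12 := closed_setU (comps_del_closed sym_e C1v) (comps_del_closed sym_e C2v).
have := minimal_fort_nbhd_closed minF vF cl_C12 F_meets_C12 F_notin_C12.
rewrite setIUr card_nbhd_setU ?nbhd1 ?nbhd2 //.
exact: disjointW (subsetIr _ _) (subsetIr _ _) d12.
Qed.
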